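(* Let $P$ be a non-abelian exponent-critical $p$-group of type $\mathcal{A}$, let $p^m=\exp(P)$, and let $A$ be a maximal subgroup of $P$ containing an element of order $p^m$. Then: (i) $A$ is abelian, normal in $P$, and contains all elements of $P$ of order $p^m$; (ii) $A\cong Z_{p^m}\times S$ for some group $S$ of exponent dividing $p^{m-1}$; (iii) $P'$ is abelian of exponent dividing $p^{m-1}$.
   Context: A finite group $G$ is exponent-critical if $\exp(G)$ is not the least common multiple of the exponents of the proper non-abelian subgroups of $G$. An exponent-critical $p$-group is of type $\mathcal{A}$ if it has exactly one abelian maximal subgroup. $Z_{p^m}$ denotes the cyclic group of order $p^m$. *)

From mathcomp Require Import all_boot all_fingroup all_solvable.
Set Implicit Arguments. Unset Strict Implicit. Unset Printing Implicit Defensive.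
Local Open Scope group_scope.

(* exp(G) is not the lcm of the exponents of the proper non-abelian
   subgroups of G (the lcm over an empty family is 1). *)
Definition exponent_critical (gT : finGroupType) (G : {set gT}) : bool :=
  exponent G != \big[lcmn/1%N]_(H : {group gT} | (H \proper G) && ~~ abelian H)
                  exponent H.

Definition type_A (gT : finGroupType) (G : {set gT}) : bool :=
  #|[set M : {group gT} | maximal M G && abelian M]| == 1%N.

From mathcomp Require Import all_boot all_fingroup all_solvable.
Set Implicit Arguments.
Unset Strict Implicit.
Unset Printing Implicit Defensive.
Local Open Scope group_scope.

(* Since exp(P) = p^m is not the lcm of the exponents of the proper
   non-abelian subgroups, all of these have exponent dividing p^(m-1).  Hence
   a maximal subgroup containing an element of order p^m is abelian, so it is
   the unique abelian maximal subgroup A.  Any other maximal subgroup M is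
   non-abelian and contains P' (as P' <= Phi(P)), which gives (iii) because
   P' also lies in the abelian group A.  Finally A :&: M is maximal in A, has
   exponent dividing p^(m-1) and misses a, so A = <a>(A :&: M); raising to the
   power p^(m-1) then maps any complement S of <a> in A into <a> :&: S = 1. *)

Lemma nonabelian_exponent_gt1 (gT : finGroupType) (G : {group gT}) :
  ~~ abelian G -> 1 < exponent G.
Proof.
apply: contraR; rewrite -leqNgt => le_e1.
have /eqP-> : G :==: 1 by rewrite trivg_exponent dvdn1 eqn_leq le_e1 exponent_gt0.
exact: abelian1.
Qed.

Lemma noncyclic_mem_maximal (gT : finGroupType) (G : {group gT}) y :
  ~~ cyclic G -> y \in G -> exists2 M : {group gT}, maximal M G & y \in M.
Proof.
move=> ncG Gy; rewrite -cycle_subG in Gy.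
have [defG | [M maxM syM]] := maximal_exists Gy.
  by rewrite -defG cycle_cyclic in ncG.
by exists M; rewrite // -cycle_subG.
Qed.

Lemma type_A_uniq (gT : finGroupType) (G M N : {group gT}) :
  type_A G -> maximal M G -> abelian M -> maximal N G -> abelian N -> M = N.
Proof.
case/cards1P=> B defB maxM abM maxN abN.
have: M \in [set B] by rewrite -defB inE maxM abM.
have: N \in [set B] by rewrite -defB inE maxN abN.
by rewrite !inE => /eqP-> /eqP->.
Qed.

Lemma p_maximalI (gT : finGroupType) (p : nat) (P A M : {group gT}) :
  prime p -> p.-group P -> maximal A P -> maximal M P -> ~~ (A \subset M) ->
  maximal (A :&: M) A.
Proof.
move=> pr_p pP maxA maxM sAM; have sAP := proper_sub (maxgroupp maxA).
apply: p_index_maximal; first exact: subsetIl.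
rewrite indexgI -indexMg (mulg_normal_maximal (p_maximal_normal pP maxM) maxM sAP sAM).
by rewrite (p_maximal_index pP maxM).
Qed.

Lemma der1_sub_maximal (gT : finGroupType) (p : nat) (P M : {group gT}) :
  p.-group P -> maximal M P -> P^`(1) \subset M.
Proof.
move=> pP maxM; apply: subset_trans (Phi_sub_max maxM).
by rewrite (Phi_joing pP) joing_subl.
Qed.

Section ExponentCritical.

Variables (gT : finGroupType) (p m : nat) (G : {group gT}).
Hypotheses (pr_p : prime p) (critG : exponent_critical G).
Hypothesis expG : exponent G = (p ^ m)%N.

Lemma exponent_critical_proper_nonabelian (H : {group gT}) :
  H \proper G -> ~~ abelian H -> exponent H %| p ^ m.-1.
Proof.
move=> prH nabH.
set L := \big[lcmn/1%N]_(K : {group gT} | (K \proper G) && ~~ abelian K) exponent K.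
have dvd_H_L : exponent H %| L.
  by move/dvdn_biglcmP: (dvdnn L); apply; rewrite prH nabH.
apply: dvdn_trans dvd_H_L _.
have dvd_L_G : L %| p ^ m.
  by apply/dvdn_biglcmP => K /andP[prK _]; rewrite -expG exponentS ?proper_sub.
have [j le_jm defL] := dvdn_pfactor _ _ pr_p dvd_L_G.
have ne_jm : j != m.
  by apply: contra critG => /eqP ej; rewrite /exponent_critical expG -/L defL ej.
have lt_jm : j < m by rewrite ltn_neqAle ne_jm.
by rewrite defL dvdn_Pexp2l ?prime_gt1 // -ltnS prednK // (leq_ltn_trans _ lt_jm).
Qed.

Lemma exponent_critical_proper_abelian (H : {group gT}) x :
  0 < m -> H \proper G -> x \in H -> #[x] = (p ^ m)%N -> abelian H.
Proof.
move=> m_gt0 prH Hx ox; apply: contraT => nabH.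
have := dvdn_trans (dvdn_exponent Hx) (exponent_critical_proper_nonabelian prH nabH).
by rewrite ox dvdn_Pexp2l ?prime_gt1 // -ltnS prednK ?ltnn.
Qed.

End ExponentCritical.

Lemma abelian_cycle_dprod_exponent (gT : finGroupType) (A N : {group gT}) a n :
  abelian A -> a \in A -> #[a] = exponent A -> maximal N A -> a \notin N ->
  exponent N %| n -> exists S : {group gT}, <[a]> \x S = A /\ exponent S %| n.
Proof.
move=> abA Aa oa maxN notNa expN.
have [S /complP[tiaS defA]] := splitsP (abelian_splits Aa oa abA).
have sSA : S \subset A by rewrite -defA mulG_subr.
have saA : <[a]> \subset A by rewrite cycle_subG.
have sNA : N \subset A := proper_sub (maxgroupp maxN).
have defNa : N * <[a]> = A.
  by apply: mulg_normal_maximal; rewrite -?sub_abelian_normal ?cycle_subG.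
exists S; split.
  by rewrite dprodE // (sub_abelian_cent2 abA).
apply/exponentP => s Ss; apply/set1gP; rewrite -tiaS inE [_ \in S]groupX // andbT.
have : s \in N * <[a]> by rewrite defNa (subsetP sSA).
case/mulsgP=> v u Nv au ->.
rewrite expgMn ?(exponentP expN v Nv) ?mul1g ?groupX //.
by apply: (centsP abA); [apply: (subsetP sNA) | apply: (subsetP saA)].
Qed.

Section TypeA.

Variables (gT : finGroupType) (p m : nat) (P A : {group gT}) (a : gT).
Hypotheses (pr_p : prime p) (pP : p.-group P) (nabP : ~~ abelian P).
Hypotheses (critP : exponent_critical P) (typeAP : type_A P).
Hypothesis expP : exponent P = (p ^ m)%N.
Hypotheses (maxA : maximal A P) (Aa : a \in A) (oa : #[a] = (p ^ m)%N).

Let m_gt0 : 0 < m.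
Proof. by move: (nonabelian_exponent_gt1 nabP); rewrite expP; case: m. Qed.

Let exponent_maximal_abelian (M : {group gT}) x :
  maximal M P -> x \in M -> #[x] = (p ^ m)%N -> abelian M.
Proof. by move=> maxM; apply: exponent_critical_proper_abelian (maxgroupp maxM). Qed.

Lemma typeA_abelian : abelian A.
Proof. exact: exponent_maximal_abelian maxA Aa oa. Qed.

Lemma typeA_maximal_abelian_eq (M : {group gT}) :
  maximal M P -> abelian M -> M = A.
Proof. by move=> maxM abM; apply: type_A_uniq typeAP maxM abM maxA typeA_abelian. Qed.

Lemma typeA_order_exponent_mem x : x \in P -> #[x] = (p ^ m)%N -> x \in A.
Proof.
move=> Px ox; have [M maxM Mx] := noncyclic_mem_maximal (contra (@cyclic_abelian _ _) nabP) Px.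
by rewrite -(typeA_maximal_abelian_eq maxM (exponent_maximal_abelian maxM Mx ox)).
Qed.

Lemma typeA_nonabelian_maximal :
  exists2 M : {group gT}, maximal M P & ~~ abelian M.
Proof.
have [_ [y Py Ay]] := properP (maxgroupp maxA).
have [M maxM My] := noncyclic_mem_maximal (contra (@cyclic_abelian _ _) nabP) Py.
exists M => //; apply: contra Ay => abM.
by rewrite -(typeA_maximal_abelian_eq maxM abM).
Qed.

Lemma typeA_der1 : abelian P^`(1) /\ exponent P^`(1) %| p ^ m.-1.
Proof.
have [M maxM nabM] := typeA_nonabelian_maximal.
have expM := exponent_critical_proper_nonabelian pr_p critP expP (maxgroupp maxM) nabM.
split; first exact: abelianS (der1_sub_maximal pP maxA) typeA_abelian.
exact: dvdn_trans (exponentS (der1_sub_maximal pP maxM)) expM.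
Qed.

Lemma typeA_cycle_dprod :
  exists S : {group gT}, <[a]> \x S = A /\ exponent S %| p ^ m.-1.
Proof.
have [M maxM nabM] := typeA_nonabelian_maximal.
have expM := exponent_critical_proper_nonabelian pr_p critP expP (maxgroupp maxM) nabM.
have oaA : #[a] = exponent A.
  apply/eqP; rewrite eqn_dvd dvdn_exponent // oa -expP.
  exact: exponentS (proper_sub (maxgroupp maxA)).
have nsAM : ~~ (A \subset M).
  apply: contra nabM => sAM; case/maxgroupP: maxA => _ /(_ M (maxgroupp maxM) sAM)->.
  exact: typeA_abelian.
have Ma : a \notin M by apply: contra nabM => Ma; apply: exponent_maximal_abelian Ma oa.
apply: abelian_cycle_dprod_exponent typeA_abelian Aa oaA (p_maximalI pr_p pP maxA maxM nsAM) _ _.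
  by rewrite inE negb_and Ma orbT.
exact: dvdn_trans (exponentS (subsetIr A M)) expM.
Qed.

End TypeA.

Theorem mainTheorem12 (gT : finGroupType) (p m : nat) (P A : {group gT}) (a : gT) :
  prime p -> p.-group P -> ~~ abelian P ->
  exponent_critical P -> type_A P ->
  exponent P = (p ^ m)%N ->
  maximal A P -> a \in A -> #[a] = (p ^ m)%N ->
  [/\ (abelian A /\ A <| P /\ forall x, x \in P -> #[x] = (p ^ m)%N -> x \in A),
      (exists C S : {group gT},
          [/\ C \x S = A, cyclic C, #|C| = (p ^ m)%N & exponent S %| p ^ m.-1]) &
      (abelian P^`(1) /\ exponent P^`(1) %| p ^ m.-1)].
Proof.
move=> pr_p pP nabP critP typeAP expP maxA Aa oa.
have [S [defA expS]] := typeA_cycle_dprod pr_p pP nabP critP typeAP expP maxA Aa oa.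
split.
- split; first exact: typeA_abelian pr_p nabP critP expP maxA Aa oa.
  split; first exact: p_maximal_normal pP maxA.
  exact: typeA_order_exponent_mem pr_p nabP critP typeAP expP maxA Aa oa.
- by exists <[a]>%G, S; rewrite cycle_cyclic -orderE oa.
- exact: typeA_der1 pr_p pP nabP critP typeAP expP maxA Aa oa.
Qed.
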